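(* Let $\mu$ be a nontrivial positive finite measure on $\partial\mathbb{D}$, let $n\ge1$, $1\le k\le n$, and let $z_1,\dots,z_k$ be zeros of $\Phi_n(z;\mu)$, repeated at most according to multiplicity (so $\prod_{j=1}^k(z-z_j)$ divides $\Phi_n(z;\mu)$). Then \[ \Phi_n(z;\mu)=\prod_{j=1}^k(z-z_j)\;\Phi_{n-k}\Bigl(z;\prod_{j=1}^k|z-z_j|^2\,d\mu\Bigr). \]
   Context: A measure on $\partial\mathbb{D}$ is nontrivial if its support is infinite. For a positive finite measure $\nu$ on $\partial\mathbb{D}$ with infinite support, $\Phi_n(z;\nu)$ is the unique monic polynomial of degree $n$ orthogonal in $L^2(\nu)$ to all polynomials of degree less than $n$; $\Phi_0=1$. In the formula, $\prod_{j}|z-z_j|^2d\mu$ denotes the measure with density $\prod_j|z-z_j|^2$ with respect to $\mu$. *)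

From HB Require Import structures.
From mathcomp Require Import all_boot all_order all_algebra.
From mathcomp Require Import all_classical all_reals all_analysis.
From mathcomp Require Import complex.
Set Implicit Arguments. Unset Strict Implicit. Unset Printing Implicit Defensive.
Import Order.TTheory GRing.Theory Num.Theory.
Import numFieldTopology.Exports numFieldNormedType.Exports.
Local Open Scope ring_scope.
Local Open Scope complex_scope.
Local Open Scope classical_set_scope.

Section OPUC.
Variable R : realType.

(* The complex plane is modelled as R * R (with its product = Borel sigma-algebra). *)
Definition toC (p : (R * R)%type) : R[i] := p.1 +i* p.2.

Definition unit_circle : set (R * R)%type := [set p | p.1 ^+ 2 + p.2 ^+ 2 = 1].

Definition msupport (mu : {measure set (R * R)%type -> \bar R}) : set (R * R)%type :=
  [set x | forall U : set (R * R)%type, open U -> U x -> (0 < mu U)%E].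

Definition nontrivial (mu : {measure set (R * R)%type -> \bar R}) : Prop :=
  infinite_set (msupport mu).

Definition cint (mu : {measure set (R * R)%type -> \bar R}) (f : (R * R)%type -> R[i]) : R[i] :=
  (Rintegral mu setT (fun x => complex.Re (f x))) +i* (Rintegral mu setT (fun x => complex.Im (f x))).

(* L^2 inner product w.r.t. the measure  w dmu  (w >= 0 a density) *)
Definition ipw (mu : {measure set (R * R)%type -> \bar R}) (w : (R * R)%type -> R[i])
  (f g : (R * R)%type -> R[i]) : R[i] :=
  cint mu (fun x => f x * (g x)^* * w x).

Definition is_monic_OP (mu : {measure set (R * R)%type -> \bar R}) (w : (R * R)%type -> R[i])
  (n : nat) (P : {poly R[i]}) : Prop :=
  [/\ P \is monic, size P = n.+1 &
      forall Q : {poly R[i]}, (size Q <= n)%N ->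
        ipw mu w (fun x => P.[toC x]) (fun x => Q.[toC x]) = 0].

Definition PhiW (mu : {measure set (R * R)%type -> \bar R}) (w : (R * R)%type -> R[i])
  (n : nat) : {poly R[i]} :=
  xget 0 [set P | is_monic_OP mu w n P].

Definition Phi (mu : {measure set (R * R)%type -> \bar R}) (n : nat) : {poly R[i]} :=
  PhiW mu (fun _ => 1) n.

End OPUC.

(* Since mu is finite and carried by the unit circle, every polynomial expression
   in z and conj z is integrable, so <p, q>_B = \int p conj(q) |B|^2 dmu is a
   Hermitian form on polynomials. It is positive definite: a nonzero polynomial
   has finitely many zeros while mu has infinitely many support points. Hence
   Gram-Schmidt yields, for every weight |B|^2, a unique monic orthogonal
   polynomial of each degree. If Phi_n(mu) = Q D with D monic of degree k, then
   <Q, S>_D = <Phi_n, S D>_1 = 0 whenever deg S < n - k, so Q is the monic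
   orthogonal polynomial of degree n - k for |D|^2 dmu. *)

From HB Require Import structures.
From mathcomp Require Import all_boot all_order all_algebra.
From mathcomp Require Import all_classical all_reals all_analysis.
From mathcomp Require Import complex finmap measurable_realfun.
From mathcomp Require Import ring lra zify.
Import Order.TTheory GRing.Theory Num.Theory.
Import numFieldTopology.Exports numFieldNormedType.Exports.
Set Implicit Arguments. Unset Strict Implicit. Unset Printing Implicit Defensive.
Local Open Scope ring_scope.
Local Open Scope complex_scope.
Local Open Scope classical_set_scope.

Local Notation Re := complex.Re.
Local Notation Im := complex.Im.

Section TameFunctions.
Variable R : realType.
Implicit Types (h : R * R -> R) (f g : R * R -> R[i]).

Lemma complex_ReM (x y : R[i]) : Re (x * y) = Re x * Re y - Im x * Im y.
Proof. by case: x => a b; case: y. Qed.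

Lemma complex_ImM (x y : R[i]) : Im (x * y) = Re x * Im y + Im x * Re y.
Proof. by case: x => a b; case: y => c d /=; rewrite [a * d]mulrC [b * c]mulrC addrC. Qed.

Lemma complex_ReJ (x : R[i]) : Re x^* = Re x. Proof. by case: x. Qed.

Lemma complex_ImJ (x : R[i]) : Im x^* = - Im x. Proof. by case: x. Qed.

Definition tame h := [/\ measurable_fun setT h, continuous h &
  exists C, forall x, unit_circle x -> `|h x| <= C].

Definition ctame f := tame (fun x => Re (f x)) /\ tame (fun x => Im (f x)).

Lemma tame_cst (c : R) : tame (fun=> c).
Proof. by split; [exact: measurable_cst | move=> x; exact: cvg_cst | exists `|c|]. Qed.

Lemma tame_fst : tame fst.
Proof.
split; [exact: measurable_fst | by case=> a b; exact: cvg_fst |].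
by exists 1 => -[a b]; rewrite /unit_circle /= => ab1; rewrite ler_norml; apply/andP; split; nra.
Qed.

Lemma tame_snd : tame snd.
Proof.
split; [exact: measurable_snd | by case=> a b; exact: cvg_snd |].
by exists 1 => -[a b]; rewrite /unit_circle /= => ab1; rewrite ler_norml; apply/andP; split; nra.
Qed.

Lemma tameN h : tame h -> tame (fun x => - h x).
Proof.
case=> mh ch [C hC]; split; [exact: measurableT_comp | by move=> x; apply: cvgN; exact: ch |].
by exists C => x /hC; rewrite normrN.
Qed.

Lemma tameD h1 h2 : tame h1 -> tame h2 -> tame (fun x => h1 x + h2 x).
Proof.
case=> m1 c1 [C1 b1] [m2 c2 [C2 b2]]; split; first exact: measurable_funD.
  by move=> x; apply: cvgD; [exact: c1 | exact: c2].
exists (C1 + C2) => x cx; exact: le_trans (ler_normD _ _) (lerD (b1 x cx) (b2 x cx)).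
Qed.

Lemma tameM h1 h2 : tame h1 -> tame h2 -> tame (fun x => h1 x * h2 x).
Proof.
case=> m1 c1 [C1 b1] [m2 c2 [C2 b2]]; split; first exact: measurable_funM.
  by move=> x; apply: cvgM; [exact: c1 | exact: c2].
exists (C1 * C2) => x cx; rewrite normrM.
exact: ler_pM (normr_ge0 _) (normr_ge0 _) (b1 x cx) (b2 x cx).
Qed.

Lemma ctame_cst (c : R[i]) : ctame (fun=> c).
Proof. by split; exact: tame_cst. Qed.

Lemma ctame_toC : ctame (@toC R).
Proof. by split; [exact: tame_fst | exact: tame_snd]. Qed.

Lemma ctameD f g : ctame f -> ctame g -> ctame (fun x => f x + g x).
Proof.
case=> f1 f2 [g1 g2]; split.
  by under [X in tame X]funext do rewrite (raddfD (@complex.Re R)); exact: tameD.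
by under [X in tame X]funext do rewrite (raddfD (@complex.Im R)); exact: tameD.
Qed.

Lemma ctameM f g : ctame f -> ctame g -> ctame (fun x => f x * g x).
Proof.
case=> f1 f2 [g1 g2]; split.
  under [X in tame X]funext do rewrite complex_ReM.
  by apply: tameD; [exact: tameM | apply/tameN/tameM].
by under [X in tame X]funext do rewrite complex_ImM; apply: tameD; exact: tameM.
Qed.

Lemma ctameJ f : ctame f -> ctame (fun x => (f x)^*).
Proof.
case=> f1 f2; split.
  by under [X in tame X]funext do rewrite complex_ReJ.
by under [X in tame X]funext do rewrite complex_ImJ; exact: tameN.
Qed.

Lemma ctame_horner (p : {poly R[i]}) : ctame (fun x => p.[toC x]).
Proof.
elim/poly_ind: p => [|p c IH].
  by under [X in ctame X]funext do rewrite horner0; exact: ctame_cst.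
under [X in ctame X]funext do rewrite hornerMXaddC.
by apply: ctameD; [apply: ctameM IH ctame_toC | exact: ctame_cst].
Qed.

Lemma measurable_unit_circle : measurable (@unit_circle R).
Proof.
have [+ _ _] := tameD (tameM tame_fst tame_fst) (tameM tame_snd tame_snd).
move=> /(_ measurableT [set 1] (measurable_set1 1)); rewrite setTI.
by congr measurable; apply/seteqP; split => x /=; rewrite !expr2.
Qed.

End TameFunctions.

Lemma finite_set_horner_toC_eq0 (R : realType) (E : {poly R[i]}) : E != 0 ->
  finite_set [set x | E.[toC x] = 0].
Proof.
move=> E0; apply: contrapT => /(infinite_set_fset (size E))[B BE szB].
have toC_inj : injective (@toC R) by case=> a b [c d] [-> ->].
have Broots : all (root E) [seq toC x | x <- enum_fset B].
  by apply/allP => _ /mapP[x xB ->]; apply/rootP; exact: BE.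
have uniqB : uniq [seq toC x | x <- enum_fset B] by rewrite map_inj_uniq ?fset_uniq.
by have := max_poly_roots E0 Broots uniqB; rewrite size_map ltnNge szB.
Qed.

Section ComplexIntegral.
Variables (R : realType) (mu : {finite_measure set (R * R)%type -> \bar R}).
Hypothesis mu_circle : mu (~` @unit_circle R) = 0%E.
Implicit Types (h : R * R -> R) (f g : R * R -> R[i]).

Lemma tame_integrable h : tame h -> mu.-integrable setT (EFin \o h).
Proof.
case=> mh _ [C hC].
have mN : measurable (~` @unit_circle R) by apply: measurableC; exact: measurable_unit_circle.
apply/(negligible_integrable mN measurableT _ mu_circle).
  exact/measurable_EFinP.
apply: (@le_integrable _ _ _ mu _ _ _ (EFin \o cst C)).
- exact: measurableD.
- by apply/measurable_EFinP; apply: measurable_funS mh.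
- by move=> x [_ /= /contrapT /hC hx]; rewrite lee_fin (le_trans hx) ?ler_norm.
- by apply: finite_measure_integrable_cst; exact: measurableD.
Qed.

Lemma cintD f g : ctame f -> ctame g ->
  cint mu (fun x => f x + g x) = cint mu f + cint mu g.
Proof.
move=> [f1 f2] [g1 g2]; rewrite /cint.
under eq_Rintegral do rewrite (raddfD (@complex.Re R)).
under [X in _ +i* X]eq_Rintegral do rewrite (raddfD (@complex.Im R)).
by rewrite !RintegralD //; exact: tame_integrable.
Qed.

Lemma cintZl (c : R[i]) f : ctame f -> cint mu (fun x => c * f x) = c * cint mu f.
Proof.
move=> [f1 f2]; rewrite /cint.
under eq_Rintegral do rewrite complex_ReM.
under [X in _ +i* X]eq_Rintegral do rewrite complex_ImM.
have cf a h : tame h -> mu.-integrable setT (EFin \o (fun x => a * h x)).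
  by move=> th; exact/tame_integrable/tameM/th/tame_cst.
rewrite RintegralB ?RintegralD ?cf // !RintegralZl ?tame_integrable //.
case: c => a b /=; set A := Rintegral _ _ _; set B := Rintegral _ _ _.
by apply/eqP; rewrite eq_complex /=; apply/andP; split; apply/eqP; ring.
Qed.

Lemma cintJ f : ctame f -> cint mu (fun x => (f x)^*) = (cint mu f)^*.
Proof.
move=> [f1 f2]; rewrite /cint.
under eq_Rintegral do rewrite complex_ReJ.
under [X in _ +i* X]eq_Rintegral do rewrite complex_ImJ -mulN1r.
by rewrite RintegralZl ?mulN1r //; exact: tame_integrable.
Qed.

Lemma Rintegral_gt0_support h x0 : tame h -> (forall x, 0 <= h x) ->
  msupport mu x0 -> 0 < h x0 -> 0 < Rintegral mu setT h.
Proof.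
move=> th h_ge0 supp_x0 hx0_gt0; have [mh ch _] := th.
pose c := h x0 / 2; pose U := h @^-1` [set y | c < y].
have oU : open U by apply: open_comp; [move=> x _; exact: ch | exact: open_gt].
have muU : (0 < mu U)%E by apply: (supp_x0 U oU); rewrite /U /c /=; lra.
have mU : measurable U.
  by rewrite -[U]setTI; apply: mh measurableT _ _; apply: open_measurable; exact: open_gt.
have cU : mu.-integrable setT (EFin \o (fun x => c * \1_U x)).
  apply: (eq_integrable measurableT _ _ _ (integrableZl measurableT c (integrable_indic mu mU))).
  by move=> x _ /=; rewrite EFinM.
apply: (lt_le_trans _ (le_Rintegral measurableT cU (tame_integrable th) _)).
  rewrite RintegralZl ?integrable_indic // /Rintegral integral_indic // setIT.
  apply: mulr_gt0; first by rewrite /c; lra.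
  by apply: fine_gt0; rewrite muU /= -ge0_fin_numE ?fin_num_measure // ltW.
move=> x _; rewrite indicE; have [/set_mem xU|_] := boolP (x \in U).
  by rewrite mulr1; exact: ltW.
by rewrite mulr0.
Qed.

Lemma cint_normsq_horner_gt0 (E : {poly R[i]}) : nontrivial mu -> E != 0 ->
  0 < Re (cint mu (fun x => E.[toC x] * (E.[toC x])^*)).
Proof.
move=> mu_inf E0 /=.
have [x0 [supp_x0 /= Ex0]] :=
  infinite_setN0 (infinite_setD mu_inf (finite_set_horner_toC_eq0 E0)).
have sq2 (e : R[i]) : Re (e * e^*) = Re e ^+ 2 + Im e ^+ 2.
  by case: e => a b /=; rewrite mulrN opprK !expr2.
under eq_Rintegral do rewrite sq2.
have [e1 e2] := ctame_horner E.
apply: (Rintegral_gt0_support _ _ supp_x0).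
- by apply: tameD; rewrite /GRing.exp /=; exact: tameM.
- by move=> x; rewrite addr_ge0 ?sqr_ge0.
- move: Ex0; case: E.[toC x0] => a b /= ab0.
  rewrite lt_neqAle addr_ge0 ?sqr_ge0 // andbT eq_sym paddr_eq0 ?sqr_ge0 //.
  by rewrite !sqrf_eq0; apply/negP => /andP[/eqP a0 /eqP b0]; apply: ab0; rewrite a0 b0.
Qed.

End ComplexIntegral.

Lemma size_sub_eq_lead (K : nzRingType) (p q : {poly K}) n :
  size p = n.+1 -> size q = n.+1 -> lead_coef p = lead_coef q ->
  (size (p - q)%R <= n)%N.
Proof.
move=> sp sq lpq; apply/leq_sizeP => j; rewrite leq_eqVlt => /orP[/eqP <-|nj].
  by rewrite coefB -[n]/(n.+1.-1) -{1}sp -sq -!lead_coefE lpq subrr.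
by rewrite coefB !nth_default ?subrr ?sp ?sq.
Qed.

Section OrthogonalPolynomials.
Variables (R : realType) (mu : {finite_measure set (R * R)%type -> \bar R}).
Hypotheses (mu_circle : mu (~` @unit_circle R) = 0%E) (mu_inf : nontrivial mu).

Definition wpoly (B : {poly R[i]}) (x : R * R) := B.[toC x] * (B.[toC x])^*.

Lemma wpoly1 : wpoly 1 = fun=> 1.
Proof. by apply/funext => x; rewrite /wpoly hornerC rmorph1 mulr1. Qed.

Variable B : {poly R[i]}.
Hypothesis B_neq0 : B != 0.
Implicit Types (p q r P Q : {poly R[i]}).

Definition polyip p q := ipw mu (wpoly B) (fun x => p.[toC x]) (fun x => q.[toC x]).

Lemma ctame_polyip_integrand p q :
  ctame (fun x => p.[toC x] * (q.[toC x])^* * wpoly B x).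
Proof.
have ctameJ_horner r : ctame (fun x => (r.[toC x])^*).
  by apply: ctameJ; exact: ctame_horner.
by apply: ctameM; apply: ctameM; first [exact: ctame_horner | exact: ctameJ_horner].
Qed.

Lemma polyipDl p q r : polyip (p + q) r = polyip p r + polyip q r.
Proof.
rewrite /polyip /ipw -cintD //; [|exact: ctame_polyip_integrand..].
by congr cint; apply/funext => x; rewrite hornerD !mulrDl.
Qed.

Lemma polyipZl a p r : polyip (a *: p) r = a * polyip p r.
Proof.
rewrite /polyip /ipw -cintZl //; [|exact: ctame_polyip_integrand..].
by congr cint; apply/funext => x; rewrite hornerZ !mulrA.
Qed.

Lemma polyipC p q : polyip q p = (polyip p q)^*.
Proof.
rewrite /polyip /ipw -cintJ //; [|exact: ctame_polyip_integrand..].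
by congr cint; apply/funext => x; rewrite /wpoly !rmorphM /= !conjcK; ring.
Qed.

Lemma polyip0l r : polyip 0 r = 0.
Proof. by rewrite -(scale0r 0) polyipZl mul0r. Qed.

Lemma polyipBl p q r : polyip (p - q) r = polyip p r - polyip q r.
Proof. by rewrite polyipDl -scaleN1r polyipZl mulN1r. Qed.

Lemma polyip_suml I (s : seq I) (F : I -> {poly R[i]}) q :
  polyip (\sum_(i <- s) F i) q = \sum_(i <- s) polyip (F i) q.
Proof. exact: (big_morph (polyip^~ q) (fun p1 p2 => polyipDl p1 p2 q) (polyip0l q)). Qed.

Lemma polyipDr p q r : polyip p (q + r) = polyip p q + polyip p r.
Proof. by rewrite polyipC polyipDl rmorphD (polyipC q p) (polyipC r p). Qed.

Lemma polyipZr p a q : polyip p (a *: q) = a^* * polyip p q.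
Proof. by rewrite polyipC polyipZl rmorphM (polyipC q p). Qed.

Lemma polyip0r p : polyip p 0 = 0.
Proof. by rewrite polyipC polyip0l rmorph0. Qed.

Lemma polyip_eq0 p : (polyip p p == 0) = (p == 0).
Proof.
have [->|p0] := eqVneq p 0; first by rewrite polyip0l eqxx.
have := cint_normsq_horner_gt0 mu_circle mu_inf (mulf_neq0 p0 B_neq0).
have -> : cint mu (fun x => (p * B).[toC x] * ((p * B).[toC x])^*) = polyip p p.
  by congr cint; apply/funext => x; rewrite /wpoly hornerM rmorphM /=; ring.
by apply: contraTF => /eqP->; rewrite /= ltxx.
Qed.

Lemma is_monic_OP_uniq m P1 P2 :
  is_monic_OP mu (wpoly B) m P1 -> is_monic_OP mu (wpoly B) m P2 -> P1 = P2.
Proof.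
case=> P1_monic P1_size P1_orth [P2_monic P2_size P2_orth].
have sD : (size (P1 - P2)%R <= m)%N.
  by apply: size_sub_eq_lead P1_size P2_size _; rewrite (monicP P1_monic) (monicP P2_monic).
apply/eqP; rewrite -subr_eq0 -polyip_eq0 polyipBl.
by rewrite /polyip (P1_orth _ sD) (P2_orth _ sD) subrr.
Qed.

Lemma polyip_monic_basis_eq0 (F : nat -> {poly R[i]}) m p :
  (forall j, (j < m)%N -> F j \is monic /\ size (F j) = j.+1) ->
  (forall j, (j < m)%N -> polyip p (F j) = 0) ->
  forall Q, (size Q <= m)%N -> polyip p Q = 0.
Proof.
elim: m => [|m IHm] F_basis pF Q.
  by rewrite size_poly_leq0 => /eqP->; rewrite polyip0r.
have IHm' Q' : (size Q' <= m)%N -> polyip p Q' = 0.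
  by apply: IHm => j jm; [apply: F_basis | apply: pF]; exact: leqW.
have [/IHm' //|Qm Qs] := leqP (size Q) m.
have [Fm_monic Fm_size] := F_basis m (ltnSn m).
have sQ : size Q = m.+1 by apply/eqP; rewrite eqn_leq Qs Qm.
have lcQ0 : lead_coef Q != 0 by rewrite lead_coef_eq0 -size_poly_gt0 sQ.
have sQF : (size (Q - lead_coef Q *: F m)%R <= m)%N.
  apply: size_sub_eq_lead sQ _ _; first by rewrite size_scale.
  by rewrite lead_coefZ (monicP Fm_monic) mulr1.
rewrite -(subrK (lead_coef Q *: F m) Q) polyipDr (IHm' _ sQF) polyipZr.
by rewrite pF ?mulr0 ?add0r.
Qed.

(* Gram-Schmidt: subtract from 'X^m its projections on the lower-degree Phi_j. *)
Lemma is_monic_OP_exists m : exists P, is_monic_OP mu (wpoly B) m P.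
Proof.
elim/ltn_ind: m => m IH.
pose F j := PhiW mu (wpoly B) j.
have F_OP j : (j < m)%N -> is_monic_OP mu (wpoly B) j (F j).
  by move=> jm; exact: xgetPex (IH j jm).
have F_orth i j : (i < m)%N -> (j < m)%N -> i != j -> polyip (F i) (F j) = 0.
  move=> im jm; have [_ Fi_size Fi_orth] := F_OP i im.
  have [_ Fj_size Fj_orth] := F_OP j jm.
  case: ltngtP => // [ij|ji] _; last by rewrite /polyip Fi_orth ?Fj_size.
  by rewrite polyipC /polyip Fj_orth ?Fi_size ?rmorph0.
pose S := \sum_(j < m) (polyip 'X^m (F j) / polyip (F j) (F j)) *: F j.
have S_size : (size (- S) < size ('X^m : {poly R[i]}))%N.
  rewrite size_polyN size_polyXn ltnS (leq_trans (size_sum _ _ _)) //.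
  apply/bigmax_leqP => j _; rewrite (leq_trans (size_scale_leq _ _)) //.
  by have [_ -> _] := F_OP j (ltn_ord j).
exists ('X^m - S); split.
- by rewrite monicE lead_coefDl // lead_coefXn.
- by rewrite size_polyDl // size_polyXn.
apply: (polyip_monic_basis_eq0 (F := F)) => j jm; first by have [] := F_OP j jm.
rewrite polyipBl polyip_suml (bigD1 (Ordinal jm)) //= big1 => [|i /eqP ij].
  have [Fj_monic _ _] := F_OP j jm.
  by rewrite addr0 polyipZl divfK ?subrr // polyip_eq0 monic_neq0.
rewrite polyipZl (F_orth i j) ?mulr0 //.
by apply/eqP => eq_ij; apply: ij; exact: val_inj.
Qed.

Lemma PhiW_wpoly_OP m : is_monic_OP mu (wpoly B) m (PhiW mu (wpoly B) m).
Proof. exact: xgetPex (is_monic_OP_exists m). Qed.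

Lemma PhiW_wpolyE m P : is_monic_OP mu (wpoly B) m P -> PhiW mu (wpoly B) m = P.
Proof. by move=> P_OP; apply: is_monic_OP_uniq P_OP; exact: PhiW_wpoly_OP. Qed.

End OrthogonalPolynomials.

Lemma is_monic_OP_divp (R : realType) (mu : {finite_measure set (R * R)%type -> \bar R})
    (C D P : {poly R[i]}) n :
  is_monic_OP mu (wpoly C) n P -> D \is monic -> D %| P ->
  is_monic_OP mu (wpoly (D * C)) (n - (size D).-1) (P %/ D).
Proof.
move=> [P_monic P_size P_orth] D_monic D_dvd.
have D_size : ((size D).-1 <= n)%N.
  by rewrite -ltnS -P_size prednK ?size_poly_gt0 ?monic_neq0 // dvdp_leq ?monic_neq0.
move: (divpK D_dvd); set Q := P %/ D => P_eq.
split.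
- by rewrite -(monicMr _ D_monic) P_eq.
- by rewrite size_divp ?monic_neq0 // P_size subSn.
move=> S S_size; have SD_size : (size (S * D)%R <= n)%N.
  have D_pos : (0 < size D)%N by rewrite size_poly_gt0 monic_neq0.
  by rewrite (leq_trans (size_polyMleq _ _)) //; lia.
rewrite -(P_orth _ SD_size) -P_eq /ipw; congr cint; apply/funext => x.
by rewrite /wpoly !hornerM !rmorphM; ring.
Qed.

Theorem theorem3 (R : realType) (mu : {finite_measure set (R * R)%type -> \bar R})
  (n k : nat) (z : 'I_k -> R[i]) :
  mu (~` @unit_circle R) = 0%E ->
  nontrivial mu ->
  (1 <= n)%N -> (1 <= k <= n)%N ->
  (\prod_(j < k) ('X - (z j)%:P)) %| Phi mu n ->
  Phi mu n =
    (\prod_(j < k) ('X - (z j)%:P)) *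
    PhiW mu (fun x => \prod_(j < k) `|toC x - z j| ^+ 2) (n - k).
Proof.
move=> mu_circle mu_inf _ _.
set D := \prod_(j < k) ('X - (z j)%:P).
have D_monic : D \is monic := monic_prod_XsubC _ _ _.
have D_size : size D = k.+1.
  by rewrite size_prod_XsubC [index_enum _]unlock -enumT size_enum_ord.
have -> : (fun x => \prod_(j < k) `|toC x - z j| ^+ 2) = wpoly D.
  apply/funext => x; rewrite /wpoly horner_prod rmorph_prod -big_split /=.
  by apply: eq_bigr => j _; rewrite hornerXsubC sqr_normc.
rewrite /Phi -wpoly1 => D_dvd.
have := is_monic_OP_divp (PhiW_wpoly_OP mu_circle mu_inf (oner_neq0 _) n) D_monic D_dvd.
rewrite mulr1 D_size /= => Q_OP.
by rewrite (PhiW_wpolyE mu_circle mu_inf (monic_neq0 D_monic) Q_OP) mulrC divpK.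
Qed.
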